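(* If $\{\mathcal P_1,\dots,\mathcal P_r\}$ is a $(v,\{k_1,\dots,k_r\})$-MOHS on a half-set $V$, then $k_1+\dots+k_r-r\le v-1$, and equality holds if and only if the associated Heffter space $(V,\bigcup_{i=1}^r\mathcal P_i)$ is a linear space, i.e. every two distinct points of $V$ lie in exactly one block of $\bigcup_i\mathcal P_i$.
   Context: A half-set of an abelian group $G$ of odd order $2v+1\ge7$ is a subset $V\subseteq G\setminus\{0\}$ containing exactly one element of each pair $\{g,-g\}$, $g\ne0$. A $(v,k)$ Heffter system on $V$ is a partition of $V$ into blocks of size $k$, each summing to $0$ in $G$. Two Heffter systems on the same half-set are orthogonal if every block of one meets every block of the other in at most one element. A $(v,\{k_1,\dots,k_r\})$-MOHS is a set of pairwise orthogonal Heffter systems $\mathcal P_1,\dots,\mathcal P_r$ on a common half-set of an abelian group of order $2v+1$, with $\mathcal P_i$ a $(v,k_i)$ Heffter system. *)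

From mathcomp Require Import all_boot all_order all_algebra.
Set Implicit Arguments. Unset Strict Implicit. Unset Printing Implicit Defensive.
Import GRing.Theory.
Local Open Scope ring_scope.

Definition half_set (G : finZmodType) (V : {set G}) : bool :=
  (0 \notin V) && [forall g : G, (g != 0) ==> ((g \in V) (+) (- g \in V))].

Definition heffter_system (G : finZmodType) (V : {set G}) (k : nat)
    (P : {set {set G}}) : bool :=
  partition P V &&
  [forall B in P, (#|B| == k)%N && (\sum_(x in B) x == 0)].

Definition orthogonal_hs (G : finZmodType) (P Q : {set {set G}}) : bool :=
  [forall B in P, forall C in Q, (#|B :&: C| <= 1)%N].

Definition MOHS (G : finZmodType) (v r : nat) (V : {set G})
    (k : 'I_r -> nat) (P : 'I_r -> {set {set G}}) : Prop :=
  #|G| = (2 * v + 1)%N /\ half_set V /\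
  (forall i, heffter_system V (k i) (P i)) /\
  (forall i j, i != j -> orthogonal_hs (P i) (P j)).

Definition linear_space (G : finZmodType) (V : {set G}) (blocks : {set {set G}}) : Prop :=
  forall x y, x \in V -> y \in V -> x != y ->
    #|[set B in blocks | (x \in B) && (y \in B)]| = 1%N.

From mathcomp Require Import all_boot all_order all_algebra.
From mathcomp Require Import zify.
Import GRing.Theory.

Set Implicit Arguments.
Unset Strict Implicit.
Unset Printing Implicit Defensive.

(* Fix a point x of V. The block of P_i through x contributes k_i - 1 points
   other than x, and by orthogonality these sets are pairwise disjoint subsets
   of V \ {x}; hence sum_i (k_i - 1) <= v - 1, with equality exactly when every
   other point shares a block with x. The equality condition does not depend
   on x, so it holds iff any two distinct points are joined by a block, which
   orthogonality makes unique. *)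

Lemma card_disjoint_bigcup (I T : finType) (F : I -> {set T}) :
  (forall i j, i != j -> [disjoint F i & F j]) ->
  #|\bigcup_i F i| = \sum_i #|F i|.
Proof.
move=> disjF; rewrite -sum1_card (partition_disjoint_bigcup _ _ disjF).
by apply: eq_bigr => i _; rewrite sum1_card.
Qed.

Lemma card_half_set (G : finZmodType) (V : {set G}) :
  half_set V -> #|G| = (2 * #|V|).+1.
Proof.
case/andP=> V0 /forallP halfV; pose W := (fun g : G => - g)%R @^-1: V.
have cardW : #|W| = #|V| by apply/card_preimset/oppr_inj.
have nonzeroE : ~: [set 0%R] = V :|: W.
  apply/setP => g; rewrite !inE; have [->|g0] /= := eqVneq g 0%R.
    by rewrite oppr0 (negbTE V0).
  by move: (halfV g); rewrite g0; case: (g \in V); case: (- g \in V)%R.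
have disjVW : [disjoint V & W].
  rewrite -setI_eq0; apply/eqP/setP => g; rewrite !inE.
  have [->|g0] := eqVneq g 0%R; first by rewrite (negbTE V0).
  by move: (halfV g); rewrite g0; case: (g \in V); case: (- g \in V)%R.
rewrite -(cardsC [set 0%R]) cards1 nonzeroE.
by have := leq_card_setU V W; rewrite disjVW => -[_ /eqP ->]; rewrite cardW; lia.
Qed.

Section OrthogonalPartitions.

Variables (T : finType) (V : {set T}) (r : nat) (k : 'I_r -> nat).
Variable P : 'I_r -> {set {set T}}.
Hypothesis partP : forall i, partition (P i) V.
Hypothesis card_blockP : forall i B, B \in P i -> #|B| = k i.
Hypothesis orthP : forall i j, i != j ->
  forall B C, B \in P i -> C \in P j -> #|B :&: C| <= 1.

Definition pblockD1 x i := pblock (P i) x :\ x.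

Lemma pblock_memV i x : x \in V -> pblock (P i) x \in P i.
Proof. by move=> xV; rewrite pblock_mem // (cover_partition (partP i)). Qed.

Lemma mem_pblockV i x : x \in V -> x \in pblock (P i) x.
Proof. by move=> xV; rewrite mem_pblock (cover_partition (partP i)). Qed.

Lemma pblock_subV i x : x \in V -> pblock (P i) x \subset V.
Proof.
move=> xV; rewrite -(cover_partition (partP i)).
by apply/subsetP => y yB; apply/bigcupP; exists (pblock (P i) x); rewrite ?pblock_memV.
Qed.

Lemma pblock_eq i x B : B \in P i -> x \in B -> pblock (P i) x = B.
Proof. exact/def_pblock/partition_trivIset/partP. Qed.

Lemma pblockI i j x : i != j -> x \in V ->
  pblock (P i) x :&: pblock (P j) x = [set x].
Proof.
move=> ij xV; apply/eqP; rewrite eq_sym eqEcard sub1set inE !mem_pblockV //.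
by rewrite cards1 (orthP ij) ?pblock_memV.
Qed.

Lemma disjoint_pblockD1 i j x : i != j -> x \in V ->
  [disjoint pblockD1 x i & pblockD1 x j].
Proof. by move=> ij xV; rewrite -setI_eq0 -setDIl pblockI // setDv. Qed.

Lemma card_pblockD1 i x : x \in V -> #|pblockD1 x i|.+1 = k i.
Proof.
move=> xV; rewrite -(card_blockP (pblock_memV i xV)).
by rewrite (cardsD1 x (pblock _ x)) mem_pblockV.
Qed.

Lemma sum_k_pblockD1 x : x \in V ->
  \sum_i k i = #|\bigcup_i pblockD1 x i| + r.
Proof.
move=> xV; rewrite card_disjoint_bigcup => [|i j ij]; last exact: disjoint_pblockD1.
under eq_bigr => i _ do rewrite -(card_pblockD1 i xV) -addn1.
by rewrite big_split /= sum_nat_const card_ord muln1.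
Qed.

Lemma bigcup_pblockD1_sub x : x \in V -> \bigcup_i pblockD1 x i \subset V :\ x.
Proof. by move=> xV; apply/bigcupsP => i _; rewrite setSD ?pblock_subV. Qed.

Lemma sum_k_le x : x \in V -> \sum_i k i <= #|V| - 1 + r.
Proof.
move=> xV; rewrite (sum_k_pblockD1 xV) leq_add2r.
by rewrite (cardsD1 x V) xV add1n subn1 /= subset_leq_card ?bigcup_pblockD1_sub.
Qed.

Lemma sum_k_eq_cover x : x \in V ->
  \sum_i k i = #|V| - 1 + r <-> \bigcup_i pblockD1 x i = V :\ x.
Proof.
move=> xV; rewrite (sum_k_pblockD1 xV) (cardsD1 x V) xV add1n subn1 /=.
split=> [/eqP | -> //]; rewrite eqn_add2r => /eqP eq_card.
by apply/eqP; rewrite eqEcard bigcup_pblockD1_sub // eq_card leqnn.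
Qed.

Lemma card_blocks_through_eq1 x y : x \in V -> y != x ->
  #|[set B in \bigcup_i P i | (x \in B) && (y \in B)]| = 1 <->
  y \in \bigcup_i pblockD1 x i.
Proof.
move=> xV yx; split.
  move/eqP/cards1P=> [B /setP/(_ B)]; rewrite !inE eqxx.
  case/and3P=> /bigcupP[i _ BP] xB yB; apply/bigcupP; exists i => //.
  by rewrite !inE yx (pblock_eq BP xB).
case/bigcupP=> j _ yj; apply/eqP/cards1P; exists (pblock (P j) x).
apply/setP => B; rewrite !inE; apply/and3P/eqP => [[/bigcupP[i _ BP] xB yB]|->].
  rewrite -(pblock_eq BP xB); have [-> //|ij] := eqVneq i j.
  have yi : y \in pblock (P i) x by rewrite (pblock_eq BP xB).
  have /setP/(_ y) := pblockI ij xV.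
  by rewrite !inE (negbTE yx) yi; move: yj => /setD1P[_ ->].
move: yj => /setD1P[_ yj]; split=> //; last exact: mem_pblockV.
by apply/bigcupP; exists j => //; apply: pblock_memV.
Qed.

Lemma sum_k_eq_linear x0 : x0 \in V ->
  \sum_i k i = #|V| - 1 + r <->
  forall x y, x \in V -> y \in V -> x != y ->
    #|[set B in \bigcup_i P i | (x \in B) && (y \in B)]| = 1.
Proof.
move=> x0V; split=> [eq_sum x y xV yV xy | linP].
  have yx : y != x by rewrite eq_sym.
  by apply/card_blocks_through_eq1; rewrite // (sum_k_eq_cover xV).1 // !inE yx.
apply/(sum_k_eq_cover x0V)/eqP; rewrite eqEsubset bigcup_pblockD1_sub //=.
apply/subsetP => y /setD1P[yx yV].
by apply/card_blocks_through_eq1; rewrite ?linP // eq_sym.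
Qed.

End OrthogonalPartitions.

Theorem proposition1p10 (G : finZmodType) (v r : nat) (V : {set G})
    (k : 'I_r -> nat) (P : 'I_r -> {set {set G}}) :
  (3 <= v)%N ->
  MOHS v V k P ->
  ((\sum_(i < r) k i)%N <= v - 1 + r)%N /\
  ((\sum_(i < r) k i)%N = (v - 1 + r)%N <-> linear_space V (\bigcup_(i < r) P i)).
Proof.
move=> v3 [cardG [halfV [heffP orthP]]].
have cardV : #|V| = v by have := card_half_set halfV; rewrite cardG; lia.
have [x xV] : exists x, x \in V by apply/set0Pn; rewrite -card_gt0 cardV; lia.
have partP i : partition (P i) V by case/andP: (heffP i).
have card_blockP i B : B \in P i -> #|B| = k i.
  by move=> BP; case/andP: (heffP i) => _ /forall_inP/(_ B BP)/andP[/eqP].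
have meetP i j : i != j ->
    forall B C, B \in P i -> C \in P j -> #|B :&: C| <= 1.
  by move=> ij B C BP; move/forall_inP: (orthP i j ij) => /(_ B BP)/forall_inP; apply.
rewrite -cardV; split; first exact: (sum_k_le partP card_blockP meetP xV).
exact: (sum_k_eq_linear partP card_blockP meetP xV).
Qed.
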